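(* Let $\mathbb{K}$ be a field of characteristic $0$. Suppose that $\mathcal{A}$ is a $2n$-dimensional Poincaré CDGA over $\mathbb{K}$ which is formal and connected. Let $\omega\in\mathcal{A}^{2n}$ be such that $[\omega]$ is the dual of the Poincaré class. Let $\theta$ be a new element of degree $2n-1$ and $\mathcal{A}_\theta=\mathcal{A}\otimes\Lambda\theta$ with $d\theta=\omega$. If $\mathcal{A}_\theta$ is formal, then $H^*(\mathcal{A})\cong\mathbb{K}[x]/(x^p)$ is a quotient of the polynomial ring in a single (homogeneous) variable.
   Context: A finite-dimensional graded commutative algebra $H$ is $m$-dimensional Poincaré if there exists $\alpha_H\in(H^m)^\vee$ (the Poincaré class) such that $H^i\to(H^{m-i})^\vee$, $x\mapsto(y\mapsto\alpha_H(xy))$, is an isomorphism for all $i$; a CDGA is Poincaré if its cohomology is. The dual of the Poincaré class is the top-degree class $c$ with $\alpha_H(c)=1$. Connected means $H^0(\mathcal{A})=\mathbb{K}$ (with $\mathcal{A}$ non-negatively graded). $\mathcal{A}_\theta=\{x+\theta y:x,y\in\mathcal{A}\}$. A CDGA is formal if it is connected to its cohomology by a zigzag of quasi-isomorphisms. *)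

From HB Require Import structures.
From mathcomp Require Import all_boot all_algebra.
Set Implicit Arguments. Unset Strict Implicit. Unset Printing Implicit Defensive.
Import GRing.Theory.
Local Open Scope ring_scope.

(* The underlying vector space is the direct sum of the homogeneous pieces
   [deg i]; [par] is the parity involution x_i |-> (-1)^i x_i (it is
   determined by the grading, cf. the axioms below). *)
Record rcdga (K : fieldType) := RCdga {
  car :> lmodType K;
  deg : nat -> car -> Prop;
  mul : car -> car -> car;
  one : car;
  dif : car -> car;
  par : car -> car
}.

Arguments deg {K} r _ _.
Arguments mul {K} r _ _.
Arguments one {K} r.
Arguments dif {K} r _.
Arguments par {K} r _.

Section Defs.
Variable K : fieldType.

Definition lin_fun (V W : lmodType K) (f : V -> W) : Prop :=
  forall (a : K) (x y : V), f (a *: x + y) = a *: f x + f y.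

Definition is_cdga (A : rcdga K) : Prop :=
  (forall i, deg A i 0 /\
     forall (a : K) (x y : A), deg A i x -> deg A i y -> deg A i (a *: x + y)) /\
  (forall x : A, exists (N : nat) (f : nat -> A),
      (forall i, deg A i (f i)) /\ x = \sum_(i < N) f i) /\
  (forall (N : nat) (f : nat -> A), (forall i, deg A i (f i)) ->
      \sum_(i < N) f i = 0 -> forall i, (i < N)%N -> f i = 0) /\
  (forall x : A, lin_fun (mul A x)) /\
  (forall y : A, lin_fun (fun x => mul A x y)) /\
  (forall x y z : A, mul A x (mul A y z) = mul A (mul A x y) z) /\
  (forall x : A, mul A (one A) x = x /\ mul A x (one A) = x) /\
  deg A 0 (one A) /\
  (forall i j (x y : A), deg A i x -> deg A j y -> deg A (i + j) (mul A x y)) /\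
  (forall i j (x y : A), deg A i x -> deg A j y ->
      mul A y x = (-1) ^+ (i * j) *: mul A x y) /\
  lin_fun (par A) /\
  (forall i (x : A), deg A i x -> par A x = (-1) ^+ i *: x) /\
  lin_fun (dif A) /\
  (forall i (x : A), deg A i x -> deg A i.+1 (dif A x)) /\
  (forall x : A, dif A (dif A x) = 0) /\
  (forall i (x y : A), deg A i x ->
      dif A (mul A x y) = mul A (dif A x) y + (-1) ^+ i *: mul A x (dif A y)).

Definition cocycle (A : rcdga K) (i : nat) (x : A) : Prop :=
  deg A i x /\ dif A x = 0.
Definition exact (A : rcdga K) (x : A) : Prop := exists c : A, x = dif A c.

(* CDGA morphisms and quasi-isomorphisms (f induces an isomorphism
   H^i(A) -> H^i(B) for every i). *)
Definition cdga_morph (A B : rcdga K) (f : A -> B) : Prop :=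
  lin_fun f /\ f (one A) = one B /\
  (forall x y : A, f (mul A x y) = mul B (f x) (f y)) /\
  (forall i (x : A), deg A i x -> deg B i (f x)) /\
  (forall x : A, f (dif A x) = dif B (f x)).

Definition quasi_iso (A B : rcdga K) (f : A -> B) : Prop :=
  cdga_morph f /\
  forall i,
    (forall b : B, cocycle i b -> exists a : A, cocycle i a /\ exact (b - f a)) /\
    (forall a : A, cocycle i a -> exact (f a) -> exact a).

Inductive zigzag : rcdga K -> rcdga K -> Prop :=
| zz_refl (A : rcdga K) : is_cdga A -> zigzag A A
| zz_fwd (A B C : rcdga K) (f : A -> B) :
    is_cdga A -> is_cdga B -> quasi_iso f -> zigzag B C -> zigzag A C
| zz_bwd (A B C : rcdga K) (f : B -> A) :
    is_cdga A -> is_cdga B -> quasi_iso f -> zigzag B C -> zigzag A C.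

(* formal: weakly equivalent (zigzag of quasi-isos) to a CDGA with zero
   differential (equivalently, to its cohomology). *)
Definition formal (A : rcdga K) : Prop :=
  exists H : rcdga K, is_cdga H /\ (forall x : H, dif H x = 0) /\ zigzag A H.

(* connected: H^0(A) = K, i.e. the unit K -> H^0(A) is an isomorphism *)
Definition connected (A : rcdga K) : Prop :=
  ~ exact (one A) /\
  forall x : A, cocycle 0 x -> exists a : K, exact (x - a *: one A).

(* [alpha] : a function A -> K representing a linear form on H^m(A) *)
Definition Poincare_class (A : rcdga K) (m : nat) (alpha : A -> K) : Prop :=
  (forall (a : K) (x y : A), cocycle m x -> cocycle m y ->
      alpha (a *: x + y) = a * alpha x + alpha y) /\
  (forall c : A, deg A m (dif A c) -> alpha (dif A c) = 0) /\
  (forall i, exists s : seq A, (forall k, (k < size s)%N -> cocycle i s`_k) /\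
      forall x : A, cocycle i x -> exists t : nat -> K,
        exact (x - \sum_(k < size s) t k *: s`_k)) /\
  (* H^i -> (H^(m-i))^dual, [x] |-> ([y] |-> alpha(xy)) is an isomorphism *)
  (forall i, (i <= m)%N ->
     (forall x : A, cocycle i x ->
        (forall y : A, cocycle (m - i) y -> alpha (mul A x y) = 0) -> exact x) /\
     (forall phi : A -> K,
        (forall (a : K) (x y : A), cocycle (m - i) x -> cocycle (m - i) y ->
            phi (a *: x + y) = a * phi x + phi y) ->
        (forall c : A, deg A (m - i) (dif A c) -> phi (dif A c) = 0) ->
        exists x : A, cocycle i x /\
          forall y : A, cocycle (m - i) y -> phi y = alpha (mul A x y))) /\
  (forall i, (m < i)%N -> forall x : A, cocycle i x -> exact x).

Definition Poincare (A : rcdga K) (m : nat) : Prop :=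
  exists alpha : A -> K, @Poincare_class A m alpha.

Definition cpow (A : rcdga K) (x : A) (j : nat) : A := iter j (mul A x) (one A).

(* H^*(A) is isomorphic, as a graded algebra, to K[x]/(x^p) with x a
   homogeneous variable of degree k > 0, the isomorphism sending x to [x]. *)
Definition cohom_truncated_poly (A : rcdga K) : Prop :=
  exists (k p : nat) (x : A), (0 < k)%N /\ cocycle k x /\
    (forall j, (j < p)%N -> ~ exact (cpow x j)) /\
    exact (cpow x p) /\
    (forall i (y : A), cocycle i y ->
       exact y \/ exists (j : nat) (a : K),
                   (j < p)%N /\ i = (j * k)%N /\ exact (y - a *: cpow x j)).

(* A_theta = A (x) Lambda(theta), |theta| = 2n-1, d theta = omega.
   The pair (x, y) stands for x + theta y. Since theta is odd,
   x theta = theta par(x), theta^2 = 0, and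
   (x1 + theta y1)(x2 + theta y2) = x1 x2 + theta (par(x1) y2 + y1 x2),
   d(x + theta y) = dx + omega y - theta dy. *)
Definition A_theta (A : rcdga K) (n : nat) (omega : A) : rcdga K :=
  @RCdga K ((A : lmodType K) * (A : lmodType K))%type
    (fun i xy => deg A i xy.1 /\
       (if (2 * n - 1 <= i)%N then deg A (i - (2 * n - 1)) xy.2 else xy.2 = 0))
    (fun xy1 xy2 => (mul A xy1.1 xy2.1,
                     mul A (par A xy1.1) xy2.2 + mul A xy1.2 xy2.1))
    (one A, 0)
    (fun xy => (dif A xy.1 + mul A omega xy.2, - dif A xy.2))
    (fun xy => (par A xy.1, - par A xy.2)).

End Defs.
Arguments Poincare_class {K} A m alpha.
Arguments Poincare {K} A m.
Arguments cohom_truncated_poly {K} A.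
Arguments connected {K} A.
Arguments formal {K} A.
Arguments is_cdga {K} A.

(* Triple Massey products of positive-degree classes in a formal CDGA all contain
   zero, and this property is invariant under quasi-isomorphisms, so it holds in
   A_theta.  Let a be a nonzero class of minimal positive degree k.  If x is a
   nonzero class of degree in (0, 2n) with xa = 0, Poincare duality gives z with
   az = lam omega + exact, lam <> 0.  In a defining system of <x, a, z> in A_theta
   the theta-component of the primitive of az must be lam, and the theta-component
   of the vanishing Massey product then exhibits lam x as exact.  So multiplication
   by a is injective below the top degree; every nonzero class is carried by a
   power of a onto the one-dimensional top cohomology, which is spanned by a power
   of a, and H(A) = K[a]/(a^p). *)
From Pilot Require Import Defs.
From HB Require Import structures.
From mathcomp Require Import all_boot all_algebra.
From mathcomp Require Import zify.
From Stdlib Require Import Classical.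
(* Re-import so that [mul] refers to the CDGA product, not to the one of [fraction]. *)
Import Defs.
Set Implicit Arguments. Unset Strict Implicit. Unset Printing Implicit Defensive.
Import GRing.Theory.
Local Open Scope ring_scope.

Section LinFun.
Variables (K : fieldType) (V W : lmodType K) (f : V -> W).
Hypothesis hf : lin_fun f.

Lemma lin_fun0 : f 0 = 0.
Proof.
have := hf 1 0 0; rewrite !scale1r !addr0 => h.
by apply: (@addrI _ (f 0)); rewrite addr0 -h.
Qed.

Lemma lin_funD x y : f (x + y) = f x + f y.
Proof. by have := hf 1 x y; rewrite !scale1r. Qed.

Lemma lin_funZ a x : f (a *: x) = a *: f x.
Proof. by have := hf a x 0; rewrite !addr0 lin_fun0 addr0. Qed.

Lemma lin_funB x y : f (x - y) = f x - f y.
Proof. by rewrite lin_funD -scaleN1r lin_funZ scaleN1r. Qed.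

Lemma lin_fun_sum N (F : nat -> V) : f (\sum_(i < N) F i) = \sum_(i < N) f (F i).
Proof.
elim: N => [|N IH]; first by rewrite !big_ord0 lin_fun0.
by rewrite !big_ord_recr /= lin_funD IH.
Qed.

End LinFun.

Lemma sign_sqr (K : fieldType) (i : nat) : ((-1) ^+ i * (-1) ^+ i : K) = 1.
Proof. by rewrite -signr_odd -exprD -signr_odd oddD addbb. Qed.

Section CdgaTheory.
Variables (K : fieldType) (B : rcdga K).
Hypothesis hB : is_cdga B.

Lemma deg0 i : deg B i 0.
Proof. by case: hB => [H _]; case: (H i). Qed.
Lemma degL i a (x y : B) : deg B i x -> deg B i y -> deg B i (a *: x + y).
Proof. by case: hB => [H _]; case: (H i) => _; apply. Qed.
Lemma degZ i a (x : B) : deg B i x -> deg B i (a *: x).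
Proof. by move=> hx; have := degL a hx (deg0 i); rewrite addr0. Qed.
Lemma degD i (x y : B) : deg B i x -> deg B i y -> deg B i (x + y).
Proof. by move=> hx hy; have := degL 1 hx hy; rewrite scale1r. Qed.
Lemma degB i (x y : B) : deg B i x -> deg B i y -> deg B i (x - y).
Proof. by move=> hx hy; rewrite -scaleN1r addrC; apply: degL. Qed.
Lemma deg_decomp (x : B) :
  exists (N : nat) (f : nat -> B), (forall i, deg B i (f i)) /\ x = \sum_(i < N) f i.
Proof. by case: hB => [_ [H _]]. Qed.
Lemma deg_sum_eq0 N (f : nat -> B) : (forall i, deg B i (f i)) ->
  \sum_(i < N) f i = 0 -> forall i, (i < N)%N -> f i = 0.
Proof. by case: hB => [_ [_ [H _]]]; apply: H. Qed.
Lemma mul_linr (x : B) : lin_fun (mul B x).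
Proof. by case: hB => [_ [_ [_ [H _]]]]. Qed.
Lemma mul_linl (y : B) : lin_fun (fun x => mul B x y).
Proof. by case: hB => [_ [_ [_ [_ [H _]]]]]. Qed.
Lemma mulA (x y z : B) : mul B x (mul B y z) = mul B (mul B x y) z.
Proof. by case: hB => [_ [_ [_ [_ [_ [H _]]]]]]. Qed.
Lemma mul1x (x : B) : mul B (one B) x = x.
Proof. by case: hB => [_ [_ [_ [_ [_ [_ [H _]]]]]]]; case: (H x). Qed.
Lemma mulx1 (x : B) : mul B x (one B) = x.
Proof. by case: hB => [_ [_ [_ [_ [_ [_ [H _]]]]]]]; case: (H x). Qed.
Lemma deg_one : deg B 0 (one B).
Proof. by case: hB => [_ [_ [_ [_ [_ [_ [_ [H _]]]]]]]]. Qed.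
Lemma deg_mul i j (x y : B) : deg B i x -> deg B j y -> deg B (i + j) (mul B x y).
Proof. by case: hB => [_ [_ [_ [_ [_ [_ [_ [_ [H _]]]]]]]]]; apply: H. Qed.
Lemma par_lin : lin_fun (par B).
Proof. by case: hB => [_ [_ [_ [_ [_ [_ [_ [_ [_ [_ [H _]]]]]]]]]]]. Qed.
Lemma parE i (x : B) : deg B i x -> par B x = (-1) ^+ i *: x.
Proof. by case: hB => [_ [_ [_ [_ [_ [_ [_ [_ [_ [_ [_ [H _]]]]]]]]]]]]; apply: H. Qed.
Lemma dif_lin : lin_fun (dif B).
Proof. by case: hB => [_ [_ [_ [_ [_ [_ [_ [_ [_ [_ [_ [_ [H _]]]]]]]]]]]]]. Qed.
Lemma deg_dif i (x : B) : deg B i x -> deg B i.+1 (dif B x).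
Proof. by case: hB => [_ [_ [_ [_ [_ [_ [_ [_ [_ [_ [_ [_ [_ [H _]]]]]]]]]]]]]]; apply: H. Qed.
Lemma dif_mul i (x y : B) : deg B i x ->
  dif B (mul B x y) = mul B (dif B x) y + (-1) ^+ i *: mul B x (dif B y).
Proof. by case: hB => [_ [_ [_ [_ [_ [_ [_ [_ [_ [_ [_ [_ [_ [_ [_ H]]]]]]]]]]]]]]]; apply: H. Qed.

Lemma mulx0 (x : B) : mul B x 0 = 0. Proof. exact: (lin_fun0 (mul_linr x)). Qed.
Lemma mul0x (y : B) : mul B 0 y = 0. Proof. exact: (lin_fun0 (mul_linl y)). Qed.
Lemma mulDx (x y z : B) : mul B (x + y) z = mul B x z + mul B y z.
Proof. exact: (lin_funD (mul_linl z)). Qed.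
Lemma mulxD (x y z : B) : mul B x (y + z) = mul B x y + mul B x z.
Proof. exact: (lin_funD (mul_linr x)). Qed.
Lemma mulxZ a (x y : B) : mul B x (a *: y) = a *: mul B x y.
Proof. exact: (lin_funZ (mul_linr x)). Qed.
Lemma mulZx a (x y : B) : mul B (a *: x) y = a *: mul B x y.
Proof. exact: (lin_funZ (mul_linl y)). Qed.
Lemma mulxB (x y z : B) : mul B x (y - z) = mul B x y - mul B x z.
Proof. exact: (lin_funB (mul_linr x)). Qed.
Lemma mulBx (x y z : B) : mul B (x - y) z = mul B x z - mul B y z.
Proof. exact: (lin_funB (mul_linl z)). Qed.
Lemma dif0 : dif B 0 = 0. Proof. exact: (lin_fun0 dif_lin). Qed.
Lemma difD (x y : B) : dif B (x + y) = dif B x + dif B y. Proof. exact: (lin_funD dif_lin). Qed.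
Lemma difZ a (x : B) : dif B (a *: x) = a *: dif B x. Proof. exact: (lin_funZ dif_lin). Qed.
Lemma difB (x y : B) : dif B (x - y) = dif B x - dif B y. Proof. exact: (lin_funB dif_lin). Qed.
Lemma par0 : par B 0 = 0. Proof. exact: (lin_fun0 par_lin). Qed.

Lemma par_invol i (x : B) : deg B i x -> par B (par B x) = x.
Proof.
move=> hx.
by rewrite (parE hx) (lin_funZ par_lin) (parE hx) scalerA sign_sqr scale1r.
Qed.

Lemma dif_one : dif B (one B) = 0.
Proof.
have := dif_mul (one B) deg_one; rewrite mul1x expr0 scale1r mul1x mulx1 => h.
by apply: (@addrI _ (dif B (one B))); rewrite addr0 -h.
Qed.

Lemma cocycle0 i : cocycle i (0 : B).
Proof. by split; [exact: deg0 | exact: dif0]. Qed.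
Lemma cocycleZ i a (x : B) : cocycle i x -> cocycle i (a *: x).
Proof. by case=> hx dx; split; [exact: degZ | rewrite difZ dx scaler0]. Qed.
Lemma cocycleB i (x y : B) : cocycle i x -> cocycle i y -> cocycle i (x - y).
Proof. by move=> [hx dx] [hy dy]; split; [exact: degB | rewrite difB dx dy subrr]. Qed.
Lemma cocycle_one : cocycle 0 (one B).
Proof. by split; [exact: deg_one | exact: dif_one]. Qed.
Lemma cocycle_mul i j (x y : B) : cocycle i x -> cocycle j y -> cocycle (i + j) (mul B x y).
Proof.
move=> [hx dx] [hy dy]; split; first exact: deg_mul.
by rewrite (dif_mul _ hx) dx dy mul0x mulx0 scaler0 addr0.
Qed.

Lemma exact0 : exact (0 : B). Proof. by exists 0; rewrite dif0. Qed.
Lemma exact_dif (c : B) : exact (dif B c). Proof. by exists c. Qed.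
Lemma exactD (x y : B) : exact x -> exact y -> exact (x + y).
Proof. by move=> [c ->] [e ->]; exists (c + e); rewrite difD. Qed.
Lemma exactZ a (x : B) : exact x -> exact (a *: x).
Proof. by move=> [c ->]; exists (a *: c); rewrite difZ. Qed.
Lemma exactB (x y : B) : exact x -> exact y -> exact (x - y).
Proof. by move=> hx hy; rewrite -scaleN1r addrC; apply: exactD => //; apply: exactZ. Qed.
Lemma exact_subr (x y : B) : exact (x - y) -> exact y -> exact x.
Proof. by move=> hxy hy; rewrite -(subrK y x); apply: exactD. Qed.
Lemma exact_addl (x y : B) : exact x -> exact (x + y) -> exact y.
Proof. by move=> hx hxy; rewrite -(addKr x y) addrC; apply: exactB. Qed.
Lemma exactZ_inv a (x : B) : a != 0 -> exact (a *: x) -> exact x.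
Proof. by move=> a0 /(exactZ a^-1); rewrite scalerA mulVf // scale1r. Qed.

Lemma deg_sum_component m N (g : nat -> B) (x : B) :
  (forall i, deg B i (g i)) -> deg B m x -> x = \sum_(i < N) g i ->
  x = if (m < N)%N then g m else 0.
Proof.
move=> hg hx defx.
pose h i := (if (i < N)%N then g i else 0) - (if i == m then x else 0).
have hh i : deg B i (h i).
  apply: degB; first by case: ifP => _; [exact: hg | exact: deg0].
  by case: eqP => [->|_]; [exact: hx | exact: deg0].
have hsum : \sum_(i < N + m.+1) h i = 0.
  rewrite sumrB -!big_mkcond -big_ord_widen ?leq_addr // big_ord1_eq.
  by rewrite ltn_addl // -defx subrr.
have := deg_sum_eq0 hh hsum (ltn_addl _ (ltnSn m)); rewrite /h eqxx => /eqP.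
by rewrite subr_eq0 => /eqP.
Qed.

Lemma exact_deg_primitive m (x : B) : exact x -> deg B m x ->
  if m is m'.+1 then exists2 c, deg B m' c & x = dif B c else x = 0.
Proof.
case=> c ->{x}; have [N [f [hf ->]]] := deg_decomp c.
pose g i := if i is i'.+1 then dif B (f i') else 0.
have hg i : deg B i (g i) by case: i => [|i]; [exact: deg0 | exact: deg_dif].
have -> : dif B (\sum_(i < N) f i) = \sum_(i < N.+1) g i.
  by rewrite (lin_fun_sum dif_lin) big_ord_recl add0r.
move=> hx; rewrite (deg_sum_component hg hx (erefl _)).
case: m hx => [|m] _ //=; rewrite ltnS; case: ifP => _.
  by exists (f m).
by exists 0; rewrite ?dif0 //; exact: deg0.
Qed.

Lemma exact_deg0 (x : B) : exact x -> deg B 0 x -> x = 0.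
Proof. exact: exact_deg_primitive. Qed.

Lemma exact_deg_pos m (x : B) : (0 < m)%N -> exact x -> deg B m x ->
  exists2 c, deg B m.-1 c & x = dif B c.
Proof. by case: m => // m _; apply: exact_deg_primitive. Qed.

Lemma exact_mulr m (e z : B) : exact e -> deg B m e -> dif B z = 0 -> exact (mul B e z).
Proof.
move=> he hd hz; have := exact_deg_primitive he hd.
case: m hd => [_ ->|m _ [c hc ->]]; first by rewrite mul0x; exact: exact0.
by exists (mul B c z); rewrite (dif_mul _ hc) hz mulx0 scaler0 addr0.
Qed.

Lemma exact_mull i (y e : B) : deg B i y -> dif B y = 0 -> exact e -> exact (mul B y e).
Proof.
move=> hy dy [c ->]; exists ((-1) ^+ i *: mul B y c).
by rewrite difZ (dif_mul _ hy) dy mul0x add0r scalerA sign_sqr scale1r.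
Qed.

Lemma cpowSr (x : B) j : cpow x j.+1 = mul B (cpow x j) x.
Proof.
elim: j => [|j IH]; first by rewrite /cpow /= mulx1 mul1x.
by rewrite -[cpow x j.+2]/(mul B x (cpow x j.+1)) {1}IH mulA.
Qed.

Lemma cpowD (x : B) i j : mul B (cpow x i) (cpow x j) = cpow x (i + j).
Proof.
elim: i => [|i IH]; first by rewrite /cpow /= mul1x.
by rewrite -[cpow x i.+1]/(mul B x (cpow x i)) -mulA IH.
Qed.

Lemma cocycle_cpow k j (x : B) : cocycle k x -> cocycle (j * k) (cpow x j).
Proof.
move=> cx; elim: j => [|j IH]; first exact: cocycle_one.
by rewrite mulSn; exact: cocycle_mul cx IH.
Qed.

End CdgaTheory.

Section Massey.
Variable K : fieldType.

(* The Massey product <x, y, z> contains 0; [par B x] supplies the sign (-1)^p. *)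
Definition massey_zero (B : rcdga K) p q r (x y z : B) :=
  exists u v : B, deg B (p + q).-1 u /\ deg B (q + r).-1 v /\
    dif B u = mul B x y /\ dif B v = mul B y z /\
    exact (mul B u z - mul B (par B x) v).

Definition massey_trivial (B : rcdga K) := forall p q r (x y z : B),
  (0 < p)%N -> (0 < q)%N -> (0 < r)%N -> cocycle p x -> cocycle q y -> cocycle r z ->
  exact (mul B x y) -> exact (mul B y z) -> massey_zero p q r x y z.

Variable B : rcdga K.
Hypothesis hB : is_cdga B.

Lemma massey_zero_cohom_l p q r (x x1 y z : B) : (0 < p)%N ->
  cocycle p x -> cocycle p x1 -> cocycle q y -> exact (x1 - x) ->
  massey_zero p q r x y z -> massey_zero p q r x1 y z.
Proof.
move=> p0 [hx dx] [hx1 dx1] [hy dy] he [u [v [hu [hv [du [dv hw]]]]]].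
have [s hs ds] := exact_deg_pos hB p0 he (degB hB hx1 hx).
exists (u + mul B s y), v; split.
  by apply: degD => //; rewrite -(prednK p0) addSn; exact: deg_mul.
split => //; split.
  by rewrite difD // du (dif_mul hB _ hs) -ds dy mulx0 // scaler0 addr0 mulBx // addrC subrK.
split => //.
have -> : mul B (u + mul B s y) z - mul B (par B x1) v =
   (mul B u z - mul B (par B x) v) + (-1) ^+ p.-1 *: dif B (mul B s v).
  rewrite (dif_mul hB _ hs) dv -ds scalerDr scalerA sign_sqr scale1r.
  rewrite (parE hB hx) (parE hB hx1) mulDx // -mulA // mulBx // !mulZx //.
  case: (p) p0 => // p' _ /=; rewrite exprS mulN1r !scaleNr scalerBr.
  by rewrite !opprK -!addrA; congr (_ + _); rewrite addrCA addNKr addrC.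
exact: (exactD hB hw (exactZ hB _ (exact_dif _))).
Qed.

Lemma massey_zero_cohom_m p q r (x y y1 z : B) : (0 < q)%N ->
  cocycle p x -> cocycle q y -> cocycle q y1 -> cocycle r z -> exact (y1 - y) ->
  massey_zero p q r x y z -> massey_zero p q r x y1 z.
Proof.
move=> q0 [hx dx] [hy dy] [hy1 dy1] [hz dz] he [u [v [hu [hv [du [dv hw]]]]]].
have [t ht dt] := exact_deg_pos hB q0 he (degB hB hy1 hy).
exists (u + (-1) ^+ p *: mul B x t), (v + mul B t z); split.
  apply: (degD hB hu); apply: (degZ hB); rewrite -(prednK q0) addnS; exact: deg_mul.
split.
  by apply: degD => //; rewrite -(prednK q0) addSn; exact: deg_mul.
split.
  rewrite difD // du difZ // (dif_mul hB _ hx) dx mul0x // add0r.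
  by rewrite scalerA sign_sqr scale1r -dt -mulxD // addrC subrK.
split.
  by rewrite difD // dv (dif_mul hB _ ht) dz mulx0 // scaler0 addr0 -dt -mulDx // addrC subrK.
suff -> : mul B (u + (-1) ^+ p *: mul B x t) z - mul B (par B x) (v + mul B t z) =
   mul B u z - mul B (par B x) v by [].
by rewrite mulDx // mulxD // (parE hB hx) !mulZx // mulA // opprD addrACA subrr addr0.
Qed.

Lemma massey_zero_cohom_r p q r (x y z z1 : B) : (0 < p + q)%N -> (0 < r)%N ->
  cocycle p x -> cocycle q y -> cocycle r z -> cocycle r z1 -> exact (z1 - z) ->
  massey_zero p q r x y z -> massey_zero p q r x y z1.
Proof.
move=> pq0 r0 [hx dx] [hy dy] [hz dz] [hz1 dz1] he [u [v [hu [hv [du [dv hw]]]]]].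
have [e he' de] := exact_deg_pos hB r0 he (degB hB hz1 hz).
exists u, (v + (-1) ^+ q *: mul B y e); split => //.
split.
  apply: (degD hB hv); apply: (degZ hB); rewrite -(prednK r0) addnS; exact: deg_mul.
split => //; split.
  rewrite difD // dv difZ // (dif_mul hB _ hy) dy mul0x // add0r.
  by rewrite scalerA sign_sqr scale1r -de -mulxD // addrC subrK.
have -> : mul B u z1 - mul B (par B x) (v + (-1) ^+ q *: mul B y e) =
   (mul B u z - mul B (par B x) v) + (-1) ^+ (p + q).-1 *: dif B (mul B u e).
  rewrite (dif_mul hB _ hu) du -de scalerDr scalerA sign_sqr scale1r.
  rewrite (parE hB hx) mulxD // !mulZx // mulxZ // scalerA mulA // mulxB //.
  have -> : ((-1) ^+ (p + q).-1 : K) = - ((-1) ^+ p * (-1) ^+ q).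
    by rewrite -exprD -(prednK pq0) exprS mulN1r opprK.
  by rewrite !scaleNr [RHS]addrC -addrA subrKA [RHS]addrC opprD addrA.
exact: (exactD hB hw (exactZ hB _ (exact_dif _))).
Qed.

Lemma massey_rep_cocycle p q r (x y z u v : B) : (0 < p)%N -> (0 < q)%N ->
  cocycle p x -> cocycle r z -> deg B (p + q).-1 u -> deg B (q + r).-1 v ->
  dif B u = mul B x y -> dif B v = mul B y z ->
  cocycle (p + q + r).-1 (mul B u z - mul B (par B x) v).
Proof.
move=> p0 q0 [hx dx] [hz dz] hu hv du dv; split.
  have hpx : deg B p (par B x) by rewrite (parE hB hx); exact: (degZ hB).
  have e1 : ((p + q + r).-1 = (p + q).-1 + r)%N by lia.
  have e2 : ((p + q + r).-1 = p + (q + r).-1)%N by lia.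
  by apply: (degB hB); [rewrite e1; exact: deg_mul | rewrite e2; exact: deg_mul].
rewrite difB // (dif_mul hB _ hu) dz mulx0 // scaler0 addr0 du (parE hB hx) mulZx // difZ //.
by rewrite (dif_mul hB _ hx) dx mul0x // add0r dv scalerA sign_sqr scale1r mulA // subrr.
Qed.

Lemma massey_trivial_dif0 : (forall x : B, dif B x = 0) -> massey_trivial B.
Proof.
move=> h0 p q r x y z _ _ _ _ _ _ [c exy] [c' eyz].
exists 0, 0; rewrite exy eyz !h0 mul0x // mulx0 // subrr.
by do !split; [exact: deg0 | exact: deg0 | exact: exact0].
Qed.

End Massey.

Section QuasiIso.
Variables (K : fieldType) (B C : rcdga K) (f : B -> C).
Hypotheses (hB : is_cdga B) (hC : is_cdga C) (hf : quasi_iso f).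

Lemma qiso_lin : lin_fun f.
Proof. by case: hf => [[]]. Qed.
Lemma qiso_mul x y : f (mul B x y) = mul C (f x) (f y).
Proof. by case: hf => [[_ [_ [H _]]] _]. Qed.
Lemma qiso_deg i x : deg B i x -> deg C i (f x).
Proof. by case: hf => [[_ [_ [_ [H _]]]] _]; apply: H. Qed.
Lemma qiso_dif x : f (dif B x) = dif C (f x).
Proof. by case: hf => [[_ [_ [_ [_ H]]]] _]. Qed.
Lemma qiso_surj i (b : C) : cocycle i b -> exists a : B, cocycle i a /\ exact (b - f a).
Proof. by case: hf => [_ H]; case: (H i) => H1 _; apply: H1. Qed.
Lemma qiso_inj i (a : B) : cocycle i a -> exact (f a) -> exact a.
Proof. by case: hf => [_ H]; case: (H i) => _; apply. Qed.

Lemma qiso_par i x : deg B i x -> f (par B x) = par C (f x).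
Proof. by move=> hx; rewrite (parE hB hx) (parE hC (qiso_deg hx)) (lin_funZ qiso_lin). Qed.
Lemma qiso_exact x : exact x -> exact (f x).
Proof. by case=> c ->; exists (f c); rewrite qiso_dif. Qed.
Lemma qiso_cocycle i x : cocycle i x -> cocycle i (f x).
Proof. by case=> hx dx; split; [exact: qiso_deg | rewrite -qiso_dif dx (lin_fun0 qiso_lin)]. Qed.

Lemma qiso_massey_zero p q r (x y z : B) : deg B p x ->
  massey_zero p q r x y z -> massey_zero p q r (f x) (f y) (f z).
Proof.
move=> hx [u [v [hu [hv [du [dv hw]]]]]].
exists (f u), (f v); split; first exact: qiso_deg.
split; first exact: qiso_deg.
split; first by rewrite -qiso_dif du qiso_mul.
split; first by rewrite -qiso_dif dv qiso_mul.
by rewrite -(qiso_par hx) -!qiso_mul -(lin_funB qiso_lin); apply: qiso_exact.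
Qed.

Lemma qiso_reflect_exact_mul i j (x y : C) (a b : B) :
  cocycle i x -> cocycle i a -> cocycle j b -> exact (x - f a) -> exact (y - f b) ->
  exact (mul C x y) -> exact (mul B a b).
Proof.
move=> [hx dx] ca cb ea eb exy.
apply: (qiso_inj (cocycle_mul hB ca cb)); rewrite qiso_mul -[mul C (f a) (f b)](subKr (mul C x y)).
apply: (exactB hC exy); rewrite -(subrKA (mul C x (f b))) -mulxB // -mulBx //.
apply: (exactD hC); first exact: (exact_mull hC hx dx eb).
exact: (exact_mulr hC ea (degB hC hx (qiso_deg ca.1)) (qiso_cocycle cb).2).
Qed.

Lemma massey_trivial_qiso_push : massey_trivial B -> massey_trivial C.
Proof.
move=> HB p q r x y z p0 q0 r0 cx cy cz exy eyz.
have [a [ca ea]] := qiso_surj cx.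
have [b [cb eb]] := qiso_surj cy.
have [c [cc ec]] := qiso_surj cz.
have eab := qiso_reflect_exact_mul cx ca cb ea eb exy.
have ebc := qiso_reflect_exact_mul cy cb cc eb ec eyz.
have := qiso_massey_zero ca.1 (HB p q r a b c p0 q0 r0 ca cb cc eab ebc).
move/(massey_zero_cohom_l hC p0 (qiso_cocycle ca) cx (qiso_cocycle cb) ea).
move/(massey_zero_cohom_m hC q0 cx (qiso_cocycle cb) cy (qiso_cocycle cc) eb).
by apply: (massey_zero_cohom_r hC _ r0 cx cy (qiso_cocycle cc) cz ec); rewrite addn_gt0 p0.
Qed.

Lemma qiso_lift_primitive i (u0 : B) (u' : C) : deg B i u0 -> deg C i u' ->
  dif C (f u0) = dif C u' -> exists2 u, deg B i u & dif B u = dif B u0 /\ exact (f u - u').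
Proof.
move=> hu0 hu' du.
have [e [ce ee]] : exists e, cocycle i e /\ exact (f u0 - u' - f e).
  by apply: qiso_surj; split; [exact: (degB hC (qiso_deg hu0) hu') | rewrite difB // du subrr].
exists (u0 - e); first exact: (degB hB hu0 ce.1).
by rewrite difB // ce.2 subr0 (lin_funB qiso_lin) addrAC.
Qed.

Lemma massey_trivial_qiso_pull : massey_trivial C -> massey_trivial B.
Proof.
move=> HC p q r x y z p0 q0 r0 cx cy cz exy eyz.
have fexact x1 x2 : exact (mul B x1 x2) -> exact (mul C (f x1) (f x2)).
  by rewrite -qiso_mul; exact: qiso_exact.
have [u' [v' [hu' [hv' [du' [dv' hw']]]]]] := HC p q r _ _ _ p0 q0 r0
  (qiso_cocycle cx) (qiso_cocycle cy) (qiso_cocycle cz) (fexact _ _ exy) (fexact _ _ eyz).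
have [pq0 qr0] : (0 < p + q)%N /\ (0 < q + r)%N by rewrite !addn_gt0 p0 q0.
have [u0 hu0 du0] := exact_deg_pos hB pq0 exy (deg_mul hB cx.1 cy.1).
have [v0 hv0 dv0] := exact_deg_pos hB qr0 eyz (deg_mul hB cy.1 cz.1).
have fdu : dif C (f u0) = dif C u' by rewrite -qiso_dif -du0 qiso_mul du'.
have fdv : dif C (f v0) = dif C v' by rewrite -qiso_dif -dv0 qiso_mul dv'.
have [u hu [du eu]] := qiso_lift_primitive hu0 hu' fdu.
have [v hv [dv ev]] := qiso_lift_primitive hv0 hv' fdv.
rewrite -du0 in du; rewrite -dv0 in dv.
exists u, v; do 4!split => //.
apply: (qiso_inj (massey_rep_cocycle hB p0 q0 cx cz hu hv du dv)).
rewrite (lin_funB qiso_lin) !qiso_mul (qiso_par cx.1); apply: (exact_subr hC _ hw').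
have -> : forall a b c d : C, a - b - (c - d) = (a - c) - (b - d).
  by move=> a b c d; rewrite !opprB addrACA [RHS]addrACA; congr (_ + _); rewrite addrC.
rewrite -mulBx // -mulxB //; apply: (exactB hC).
  exact: (exact_mulr hC eu (degB hC (qiso_deg hu) hu') (qiso_cocycle cz).2).
have [hfx dfx] := qiso_cocycle cx.
apply: (exact_mull (i := p) hC _ _ ev); rewrite (parE hC hfx); first exact: (degZ hC).
by rewrite difZ // dfx scaler0.
Qed.

End QuasiIso.

Lemma zigzag_massey_trivial (K : fieldType) (A H : rcdga K) :
  zigzag A H -> massey_trivial A <-> massey_trivial H.
Proof.
elim=> [A0 _ | A0 B0 C0 f hA0 hB0 hf _ IH | A0 B0 C0 f hA0 hB0 hf _ IH] //.
  split=> h; first by apply/IH; exact: massey_trivial_qiso_push hA0 hB0 hf h.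
  exact: massey_trivial_qiso_pull hA0 hB0 hf (IH.2 h).
split=> h; first by apply/IH; exact: massey_trivial_qiso_pull hB0 hA0 hf h.
exact: massey_trivial_qiso_push hB0 hA0 hf (IH.2 h).
Qed.

Lemma formal_massey_trivial (K : fieldType) (A : rcdga K) : formal A -> massey_trivial A.
Proof.
by case=> H [hH [h0 zz]]; apply/(zigzag_massey_trivial zz); exact: massey_trivial_dif0.
Qed.

Lemma classical_ex_min (P : nat -> Prop) :
  (exists n, P n) -> exists n, P n /\ forall m, (m < n)%N -> ~ P m.
Proof.
move=> [n Pn]; elim/ltn_ind: n Pn => n IH Pn.
have [[m [lt_mn Pm]]|H] := classic (exists m, (m < n)%N /\ P m); first exact: IH m lt_mn Pm.
by exists n; split => // m lt_mn Pm; apply: H; exists m.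
Qed.

Section ThetaExtension.
Variables (K : fieldType) (A : rcdga K) (n : nat) (omega : A).
Hypotheses (hA : is_cdga A) (hconn : connected A) (omega_nex : ~ exact omega).

Local Notation T := (A_theta n omega).

Lemma connected_cocycle0 (y : A) : cocycle 0 y -> exists mu : K, y = mu *: one A.
Proof.
move=> cy; have [_ /(_ y cy) [mu hmu]] := hconn; exists mu.
apply/eqP; rewrite -subr_eq0; apply/eqP; apply: (exact_deg0 hA hmu).
exact: (degB hA cy.1 (degZ hA _ (deg_one hA))).
Qed.

Lemma omega_coef_exact (mu : K) : exact (mu *: omega) -> mu = 0.
Proof.
move=> h; have [//|mu0] := eqVneq mu 0.
by case: omega_nex; exact: (exactZ_inv hA mu0 h).
Qed.

Lemma A_theta_cocycle i (x : A) : cocycle i x -> @cocycle K T i (x, 0).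
Proof.
case=> hx dx; split; first by split => //; case: ifP => _ //; exact: deg0.
by rewrite /= dx mulx0 // dif0 // oppr0 addr0.
Qed.

Lemma A_theta_exact (x : A) : exact x -> @exact K T (x, 0).
Proof. by case=> c ->; exists (c, 0); rewrite /= mulx0 // dif0 // oppr0 addr0. Qed.

Lemma theta_coef (v1 v2 : A) (lam : K) : cocycle 0 v2 ->
  exact (dif A v1 + mul A omega v2 - lam *: omega) -> v2 = lam *: one A.
Proof.
move=> cv2; have [mu ->] := connected_cocycle0 cv2.
rewrite mulxZ // mulx1 // -addrA -scalerBl => he.
suff /eqP : mu - lam = 0 by rewrite subr_eq0 => /eqP ->.
exact: omega_coef_exact (exact_addl hA (exact_dif v1) he).
Qed.

Lemma theta_coef_exact k m (u1 u2 : A) :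
  (forall j (y : A), (0 < j)%N -> (j < k)%N -> cocycle j y -> exact y) ->
  (m < 2 * n - 1 + k)%N -> @deg K T m (u1, u2) -> dif A u2 = 0 ->
  exact (dif A u1 + mul A omega u2) -> exists2 j, deg A j u2 & exact u2.
Proof.
move=> kmin hm [_ hu2] du2 eU.
case: ifP hu2 => _ /= hu2; last by exists 0%N; rewrite hu2; [exact: deg0 | exact: exact0].
exists (m - (2 * n - 1))%N => //.
have [j0|j_gt0] := posnP (m - (2 * n - 1))%N; last by apply: (kmin _ _ j_gt0); [lia | split].
rewrite j0 in hu2; have {}eU : exact (dif A u1 + mul A omega u2 - 0 *: omega).
  by rewrite scale0r subr0.
by rewrite (theta_coef (conj hu2 du2) eU) scale0r; exact: exact0.
Qed.

Lemma A_theta_massey_nontrivial k p (a x z : A) (lam : K) :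
  (0 < k)%N -> cocycle k a ->
  (forall j (y : A), (0 < j)%N -> (j < k)%N -> cocycle j y -> exact y) ->
  (0 < p)%N -> (p < 2 * n)%N -> (k < 2 * n)%N -> cocycle p x -> ~ exact x ->
  exact (mul A x a) -> cocycle (2 * n - k) z -> lam != 0 ->
  exact (mul A a z - lam *: omega) -> ~ massey_trivial T.
Proof.
move=> k0 ca kmin p0 p2n k2n cx nx exa cz lam0 eaz hM.
have eXY : @exact K T (mul T (x, 0) (a, 0)).
  by rewrite /= mulx0 // mul0x // addr0; exact: A_theta_exact.
have eYZ : @exact K T (mul T (a, 0) (z, 0)).
  have [e he] := eaz; exists (e, lam *: one A).
  rewrite /= mulx0 // mul0x // addr0 difZ // dif_one // scaler0 oppr0.
  by rewrite mulxZ // mulx1 // -he subrK.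
have r0 : (0 < 2 * n - k)%N by rewrite subn_gt0.
have [[u1 u2] [[v1 v2] [hU [[_ hv2] [dU [dV [[g1 g2] hG]]]]]]] :=
  hM p k (2 * n - k)%N (x, 0) (a, 0) (z, 0) p0 k0 r0
    (A_theta_cocycle cx) (A_theta_cocycle ca) (A_theta_cocycle cz) eXY eYZ.
have [dU1 dU2] := (congr1 fst dU, congr1 snd dU).
have [dV1 dV2] := (congr1 fst dV, congr1 snd dV).
rewrite /= in dU1 dV1.
move: dU2 dV2 => /= /eqP; rewrite mulx0 // mul0x // addr0 oppr_eq0 => /eqP du2.
move/eqP; rewrite mulx0 // mul0x // addr0 oppr_eq0 => /eqP dv2.
have e2n : ((k + (2 * n - k)).-1 = 2 * n - 1)%N by lia.
rewrite /= e2n leqnn subnn in hv2.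
have {}dV1 : exact (dif A v1 + mul A omega v2 - lam *: omega) by rewrite dV1.
have v2E := theta_coef (conj hv2 dv2) dV1.
have {}dU1 : exact (dif A u1 + mul A omega u2) by rewrite dU1.
have hpk : ((p + k).-1 < 2 * n - 1 + k)%N by lia.
have [j hu2 eu2] := theta_coef_exact kmin hpk hU du2 dU1.
have exu2z := exact_mulr hA eu2 hu2 cz.2.
(* The theta-component of the Massey relation reads u2 z - lam x = - d g2. *)
have hG2 := congr1 snd hG.
rewrite /= mulx0 // add0r (par_invol hA cx.1) par0 // oppr0 mul0x // addr0 in hG2.
rewrite v2E mulxZ // mulx1 // in hG2.
apply: nx; apply: (exactZ_inv hA lam0); apply: (exact_subr hA _ exu2z).
by rewrite -opprB hG2 opprK; exact: exact_dif.
Qed.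

End ThetaExtension.

Section PoincareDuality.
Variables (K : fieldType) (A : rcdga K) (n : nat) (alpha : A -> K) (omega : A).
Hypotheses (hA : is_cdga A) (hP : Poincare_class A (2 * n) alpha) (hconn : connected A).
Hypotheses (homega : cocycle (2 * n) omega) (homega1 : alpha omega = 1).

Local Notation T := (A_theta n omega).

Lemma alpha_lin (c : K) (x y : A) : cocycle (2 * n) x -> cocycle (2 * n) y ->
  alpha (c *: x + y) = c * alpha x + alpha y.
Proof. by case: hP => [H _]; apply: H. Qed.

Lemma Poincare_high_exact i (x : A) : (2 * n < i)%N -> cocycle i x -> exact x.
Proof. by move=> hi hx; case: hP => [_ [_ [_ [_ H]]]]; exact: (H i hi x hx). Qed.

Lemma Poincare_nondeg i (x : A) : (i <= 2 * n)%N -> cocycle i x ->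
  (forall y : A, cocycle (2 * n - i) y -> alpha (mul A x y) = 0) -> exact x.
Proof. by case: hP => [_ [_ [_ [H _]]]] hi; case: (H i hi) => H1 _; apply: H1. Qed.

Lemma omega_nonexact : ~ exact omega.
Proof.
case=> c hc; case: hP => [_ [Pdif _]].
by have := Pdif c; rewrite -hc homega1 => /(_ homega.1) /eqP; rewrite oner_eq0.
Qed.

Lemma alphaZ c (x : A) : cocycle (2 * n) x -> alpha (c *: x) = c * alpha x.
Proof.
have alpha0 : alpha 0 = 0.
  have := alpha_lin 1 (cocycle0 hA _) (cocycle0 hA _); rewrite scaler0 addr0 mul1r => h.
  by apply: (@addrI _ (alpha 0)); rewrite addr0 -h.
by move=> h; have := alpha_lin c h (cocycle0 hA _); rewrite !addr0 alpha0 addr0.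
Qed.

Lemma top_cohomologous (c : A) : cocycle (2 * n) c -> exact (c - alpha c *: omega).
Proof.
move=> cc; have cw : cocycle (2 * n) (c - alpha c *: omega).
  exact: (cocycleB hA cc (cocycleZ hA _ homega)).
apply: (Poincare_nondeg (leqnn _) cw) => y; rewrite subnn => cy.
have [mu ->] := connected_cocycle0 hA hconn cy.
rewrite mulxZ // mulx1 // (alphaZ _ cw) addrC -scaleNr alpha_lin //.
by rewrite homega1 mulr1 addNr mulr0.
Qed.

Lemma alpha_nonexact (v : A) : cocycle (2 * n) v -> ~ exact v -> alpha v != 0.
Proof.
move=> cv nv; apply/eqP => h; apply: nv.
by have := top_cohomologous cv; rewrite h scale0r subr0.
Qed.

Lemma top_proportional (u v : A) : cocycle (2 * n) u -> cocycle (2 * n) v -> alpha v != 0 ->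
  exact (u - (alpha u / alpha v) *: v).
Proof.
move=> cu cv v0.
have -> : u - (alpha u / alpha v) *: v =
   (u - alpha u *: omega) - (alpha u / alpha v) *: (v - alpha v *: omega).
  by rewrite scalerBr scalerA divfK // opprB addrA subrK.
by apply: (exactB hA); [exact: top_cohomologous | apply: (exactZ hA); exact: top_cohomologous].
Qed.

Section Generator.
Hypothesis hM : massey_trivial T.
Variables (k : nat) (a : A).
Hypotheses (k_gt0 : (0 < k)%N) (ca : cocycle k a) (na : ~ exact a).
Hypothesis kmin : forall j (y : A), (0 < j)%N -> (j < k)%N -> cocycle j y -> exact y.

Lemma mul_gen_exact i (c : A) : cocycle i c -> (i < 2 * n)%N -> exact (mul A c a) -> exact c.
Proof.
move=> cc i2n eca; have [i0|i_gt0] := posnP i.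
  rewrite i0 in cc; have [mu defc] := connected_cocycle0 hA hconn cc.
  have [mu0|mu_neq0] := eqVneq mu 0; first by rewrite defc mu0 scale0r; exact: exact0.
  by case: na; apply: (exactZ_inv hA mu_neq0); rewrite -(mul1x hA a) -mulZx // -defc.
apply: NNPP => nc.
have ki : (k <= i)%N by rewrite leqNgt; apply/negP => ik; exact: nc (kmin i_gt0 ik cc).
have k2n : (k < 2 * n)%N := leq_ltn_trans ki i2n.
have [z [cz az0]] : exists z, cocycle (2 * n - k) z /\ alpha (mul A a z) != 0.
  apply: NNPP => hz; apply: na; apply: (Poincare_nondeg (ltnW k2n) ca) => y cy.
  by apply: NNPP => hy; apply: hz; exists y; split => //; apply/eqP.
have caz : cocycle (2 * n) (mul A a z) by rewrite -(subnKC (ltnW k2n)); exact: cocycle_mul.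
exact: (A_theta_massey_nontrivial hA hconn omega_nonexact k_gt0 ca kmin i_gt0 i2n k2n
  cc nc eca cz az0 (top_cohomologous caz) hM).
Qed.

Lemma mul_gen_pow_exact i r (c : A) : cocycle i c -> (i + r * k <= 2 * n)%N ->
  exact (mul A c (cpow a r)) -> exact c.
Proof.
move=> cc; elim: r => [|r IH] hr; first by rewrite mulx1.
rewrite cpowSr // mulA // => ecar; apply: IH; first by rewrite mulSn in hr; lia.
apply: (mul_gen_exact (cocycle_mul hA cc (cocycle_cpow hA r ca))) => //.
by rewrite mulSn in hr; lia.
Qed.

Lemma nonexact_reaches_top i (y : A) : cocycle i y -> ~ exact y ->
  exists r, (i + r * k = 2 * n)%N /\ ~ exact (mul A y (cpow a r)).
Proof.
move=> cy ny.
have i2n : (i <= 2 * n)%N.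
  by rewrite leqNgt; apply/negP => h; exact: ny (Poincare_high_exact h cy).
set r := ((2 * n - i) %/ k)%N.
have r_le : (r * k <= 2 * n - i)%N := leq_divM _ _.
have r_gt : (2 * n - i < r.+1 * k)%N := ltn_ceil _ k_gt0.
have cyr := cocycle_mul hA cy (cocycle_cpow hA r ca).
have nyr : ~ exact (mul A y (cpow a r)) by move=> h; apply: ny (mul_gen_pow_exact cy _ h); lia.
exists r; split => //; apply/eqP; rewrite eqn_leq; apply/andP; split; first lia.
rewrite leqNgt; apply/negP => hlt; apply: nyr; apply: (mul_gen_exact cyr hlt).
by apply: (Poincare_high_exact _ (cocycle_mul hA cyr ca)); rewrite mulSn in r_gt; lia.
Qed.

Lemma cohom_truncated_of_generator : cohom_truncated_poly A.
Proof.
have one_nex : ~ exact (one A) by case: hconn.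
have [m [hm nam]] := nonexact_reaches_top (cocycle_one hA) one_nex.
rewrite add0n in hm; rewrite mul1x // in nam.
exists k, m.+1, a; split => //; split => //; split.
  move=> j jm ej; apply: one_nex; apply: (mul_gen_pow_exact (cocycle_one hA) _ (r := j)).
    by rewrite add0n -hm leq_mul2r -ltnS jm orbT.
  by rewrite mul1x.
split.
  by apply: (Poincare_high_exact _ (cocycle_cpow hA _ ca)); rewrite mulSn; lia.
move=> i y cy; have [ey|ny] := classic (exact y); [by left | right].
have [r [hr nyr]] := nonexact_reaches_top cy ny.
have rm : (r <= m)%N by rewrite -(leq_pmul2r k_gt0) hm -hr leq_addl.
have hi : i = ((m - r) * k)%N by rewrite mulnBl hm -hr addnK.
pose nu := alpha (mul A y (cpow a r)) / alpha (cpow a m).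
exists (m - r)%N, nu; split; first lia.
split => //; apply: (mul_gen_pow_exact (r := r) (cocycleB hA cy _)); last 1 first.
- rewrite mulBx // mulZx // cpowD // subnK //.
  have cyr : cocycle (2 * n) (mul A y (cpow a r)).
    by rewrite -hr; exact: (cocycle_mul hA cy (cocycle_cpow hA _ ca)).
  have cam : cocycle (2 * n) (cpow a m) by rewrite -hm; exact: (cocycle_cpow hA _ ca).
  exact: (top_proportional cyr cam (alpha_nonexact cam nam)).
- by rewrite hi; exact: (cocycleZ hA _ (cocycle_cpow hA _ ca)).
- by rewrite hr.
Qed.

End Generator.

Lemma massey_trivial_theta_truncated : (0 < n)%N -> massey_trivial T -> cohom_truncated_poly A.
Proof.
move=> n_gt0 hM.
have [k [[k_gt0 [a [ca na]]] kmin]] : exists k,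
    ((0 < k)%N /\ exists a : A, cocycle k a /\ ~ exact a) /\
    forall j, (j < k)%N -> ~ ((0 < j)%N /\ exists a : A, cocycle j a /\ ~ exact a).
  apply: classical_ex_min; exists (2 * n)%N; split; first by rewrite muln_gt0.
  by exists omega; split; [exact: homega | exact: omega_nonexact].
apply: (cohom_truncated_of_generator hM k_gt0 ca na) => j y j_gt0 jk cy.
by apply: NNPP => ny; apply: (kmin j jk); split => //; exists y.
Qed.

End PoincareDuality.

Theorem theorem3p9 (K : fieldType) (charK0 : [pchar K] =i pred0)
  (A : rcdga K) (n : nat) (n_gt0 : (0 < n)%N)
  (hA : is_cdga A) (alpha : A -> K) (hP : Poincare_class A (2 * n) alpha)
  (hformal : formal A) (hconn : connected A)
  (omega : A) (homega : cocycle (2 * n) omega) (homega1 : alpha omega = 1)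
  (hformal_theta : formal (A_theta n omega)) :
  cohom_truncated_poly A.
Proof.
exact: (massey_trivial_theta_truncated hA hP hconn homega homega1 n_gt0
  (formal_massey_trivial hformal_theta)).
Qed.
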